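(* Let $E$ be a smooth curve of genus $1$ and $p\in E$ a point. Consider the multiplication map $$\operatorname{Sym}^2H^0(E,\mathcal{O}_E(4p))\to H^0(E,\mathcal{O}_E(8p)).$$ Then, up to scaling (i.e. as a point of $\mathbb{P}\ker$), there is a unique nonzero element $\rho_E$ in the kernel of this map satisfying $\operatorname{ord}_p(\rho_E)\ge 4$, i.e. lying in the span of the symmetric tensors $\sigma\otimes\tau$ with $\sigma,\tau\in H^0(E,\mathcal{O}_E(4p))$ and $\operatorname{ord}_p(\sigma)+\operatorname{ord}_p(\tau)\ge 4$.
   Context: This arises in the inductive degeneration argument for the Strong Maximal Rank Conjecture in $\mathbb{P}^4$: for a nodal curve $C=D\cup_p E$ with $[D,p]\in\mathcal{M}_{g-1,1}$ general and $[E,p]\in\mathcal{M}_{1,1}$, the $E$-aspect of the relevant limit $g^4_d$ is forced to be $V_E=(d-5)p+H^0(E,\mathcal{O}_E(5p))$, and after removing the base point $p$ the $E$-aspect quadric $\rho_E$ becomes an element of the kernel of $\operatorname{Sym}^2H^0(E,\mathcal{O}_E(4p))\to H^0(E,\mathcal{O}_E(8p))$ with $\operatorname{ord}_p(\rho_E)\ge 4$. Here the order at $p$ of a quadric is computed via the vanishing orders at $p$ of the sections in its tensors. *)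

From HB Require Import structures.
From mathcomp Require Import all_boot all_order all_algebra.
Set Implicit Arguments. Unset Strict Implicit. Unset Printing Implicit Defensive.
Import GRing.Theory.
Local Open Scope ring_scope.

(* A smooth genus-1 curve E with a point p, in Weierstrass form:
     E : y^2 + a1 x y + a3 y = x^3 + a2 x^2 + a4 x + a6,
   p = the point at infinity, with nonzero discriminant (smoothness). *)
Record weierstrass (k : fieldType) := Weierstrass {
  wa1 : k; wa2 : k; wa3 : k; wa4 : k; wa6 : k }.

Section Curve.
Variables (k : fieldType) (W : weierstrass k).
Let a1 := wa1 W. Let a2 := wa2 W. Let a3 := wa3 W.
Let a4 := wa4 W. Let a6 := wa6 W.

Definition discriminant : k :=
  let b2 := a1 ^+ 2 + 4%:R * a2 in
  let b4 := 2%:R * a4 + a1 * a3 in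
  let b6 := a3 ^+ 2 + 4%:R * a6 in
  let b8 := a1 ^+ 2 * a6 + 4%:R * a2 * a6 - a1 * a3 * a4 + a2 * a3 ^+ 2
            - a4 ^+ 2 in
  - b2 ^+ 2 * b8 - 8%:R * b4 ^+ 3 - 27%:R * b6 ^+ 2 + 9%:R * b2 * b4 * b6.

Definition smooth_weierstrass : Prop := discriminant != 0.

(* Regular functions on E \ {p}: the coordinate ring k[x,y]/(F), every
   element written uniquely as P(x) + Q(x) y, encoded as the pair (P, Q). *)
Definition fn := ({poly k} * {poly k})%type.

Definition cubic : {poly k} :=
  'X^3 + a2%:P * 'X^2 + a4%:P * 'X + a6%:P.

Definition fadd (f g : fn) : fn := (f.1 + g.1, f.2 + g.2).
Definition fscale (c : k) (f : fn) : fn := (c *: f.1, c *: f.2).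
Definition fzero : fn := (0, 0).

(* multiplication, reducing with y^2 = cubic(x) - (a1 x + a3) y *)
Definition fmul (f g : fn) : fn :=
  (f.1 * g.1 + f.2 * g.2 * cubic,
   f.1 * g.2 + g.1 * f.2 - f.2 * g.2 * (a1 *: 'X + a3%:P)).

(* pole order at p (x has a pole of order 2, y of order 3) *)
Definition poleord (f : fn) : nat :=
  maxn (if f.1 == 0 then 0%N else ((size f.1).-1).*2)
       (if f.2 == 0 then 0%N else (((size f.2).-1).*2 + 3)%N).

Definition H0 (n : nat) (f : fn) : Prop := (poleord f <= n)%N.

Definition ebasis (i : 'I_4) : fn :=
  match val i with
  | 0 => (1, 0)
  | 1 => ('X, 0)
  | 2 => (0, 1)
  | _ => ('X^2, 0)
  end.

Definition sec (s : 'rV[k]_4) : fn :=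
  (\sum_i s 0 i *: (ebasis i).1, \sum_i s 0 i *: (ebasis i).2).

(* vanishing order at p of a nonzero section f of O_E(n p):  n - poleord f.
   The zero section has infinite order. *)
Definition ordp (n : nat) (f : fn) : nat := (n - poleord f)%N.

(* Sym^2 H^0(O_E(4p)) is represented in the basis e_i e_j (i <= j) as
   upper triangular 4x4 matrices of coefficients. *)
Definition is_sym2 (q : 'M[k]_4) : Prop := forall i j : 'I_4, (j < i)%N -> q i j = 0.

Definition symprod (s t : 'rV[k]_4) : 'M[k]_4 :=
  \matrix_(i, j) (if (i < j)%N then s 0 i * t 0 j + s 0 j * t 0 i
                  else if i == j then s 0 i * t 0 i else 0).

Definition mult (q : 'M[k]_4) : fn :=
  (\sum_(i < 4) \sum_(j < 4 | (i <= j)%N) q i j *: (fmul (ebasis i) (ebasis j)).1,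
   \sum_(i < 4) \sum_(j < 4 | (i <= j)%N) q i j *: (fmul (ebasis i) (ebasis j)).2).

(* ord_p(sigma) + ord_p(tau) >= 4, with ord_p(0) = infinity *)
Definition good_pair (st : 'rV[k]_4 * 'rV[k]_4) : Prop :=
  sec st.1 = fzero \/ sec st.2 = fzero \/
  (4 <= ordp 4 (sec st.1) + ordp 4 (sec st.2))%N.

Definition ord_ge4 (q : 'M[k]_4) : Prop :=
  exists l : seq ('rV[k]_4 * 'rV[k]_4),
    (forall st, st \in l -> good_pair st) /\
    q = \sum_(st <- l) symprod st.1 st.2.

End Curve.

(* In the basis e_0, e_1, e_2, e_3 = 1, x, y, x^2 of H^0(O_E(4p)) the pole
   orders at p are 0, 2, 3, 4, all distinct, so a section has the pole order
   of the worst basis vector in its support.  Hence a product sigma.tau with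
   ord_p sigma + ord_p tau >= 4 only involves monomials e_i e_j whose pole
   orders add up to at most 4, and the coordinates of e_1e_2, e_1e_3, e_2^2,
   e_2e_3, e_3^2 vanish.  On the remaining coordinates the multiplication map
   reads q_00 + q_01 x + q_02 y + (q_03 + q_11) x^2, whose kernel is the line
   spanned by rho_E = e_0 e_3 - e_1^2. *)

From HB Require Import structures.
From mathcomp Require Import all_boot all_order all_algebra.
From mathcomp Require Import ring zify.
Set Implicit Arguments. Unset Strict Implicit. Unset Printing Implicit Defensive.
Import GRing.Theory.
Local Open Scope ring_scope.

Lemma big_ord4 (V : nmodType) (F : 'I_4 -> V) :
  \sum_(i < 4) F i = F 0 + F 1 + F 2 + F 3.
Proof.
rewrite !big_ord_recl big_ord0 addr0 !addrA.
by congr (F _ + F _ + F _ + F _); apply: val_inj.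
Qed.

Lemma ord4P (i : 'I_4) : [\/ i = 0, i = 1, i = 2 | i = 3].
Proof.
by case: i => -[|[|[|[|//]]]] ?; [constructor 1|constructor 2|constructor 3|constructor 4];
  apply: val_inj.
Qed.

Lemma size_poly_gt_coef (R : nzSemiRingType) (p : {poly R}) n : p`_n != 0 -> (n < size p)%N.
Proof. by rewrite ltnNge; apply: contra => /(nth_default 0)/eqP. Qed.

Section SectionsOfO4p.
Variable k : fieldType.
Implicit Types (f : fn k) (s t : 'rV[k]_4) (q : 'M[k]_4) (i j : 'I_4).

Lemma poleord_fscale c f : c != 0 -> poleord (fscale c f) = poleord f.
Proof. by move=> c0; rewrite /poleord /= !scaler_eq0 (negPf c0) !size_scale. Qed.

Lemma poleord_ebasis i : poleord (ebasis k i) = nth 0%N [:: 0; 2; 3; 4]%N i.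
Proof.
by case: (ord4P i) => ->;
  rewrite /poleord /= ?eqxx ?oner_eq0 ?polyX_eq0 -?size_poly_eq0 ?size_poly1 ?size_polyX ?size_polyXn.
Qed.

Lemma ebasis_H0 i : H0 4 (ebasis k i).
Proof. by rewrite /H0 poleord_ebasis; case: (ord4P i) => ->. Qed.

Lemma poleord_ge_coef1 f n : f.1`_n != 0 -> (n.*2 <= poleord f)%N.
Proof.
move=> fn0; have f0 : f.1 != 0 by apply: contraNneq fn0 => ->; rewrite coef0.
by move: (size_poly_gt_coef fn0); rewrite /poleord (negPf f0) -!muln2; lia.
Qed.

Lemma poleord_ge_coef2 f n : f.2`_n != 0 -> (n.*2 + 3 <= poleord f)%N.
Proof.
move=> fn0; have f0 : f.2 != 0 by apply: contraNneq fn0 => ->; rewrite coef0.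
by move: (size_poly_gt_coef fn0); rewrite /poleord (negPf f0) -!muln2; lia.
Qed.

Lemma secE s : sec s = ((s 0 0)%:P + s 0 1 *: 'X + s 0 3 *: 'X^2, (s 0 2)%:P).
Proof. by rewrite /sec !big_ord4 /= !scaler0 !addr0 !add0r !alg_polyC. Qed.

Lemma sec_delta i : sec (delta_mx 0 i) = ebasis k i.
Proof.
by case: (ord4P i) => ->; rewrite secE !mxE /= !(scale1r, scale0r, addr0, add0r).
Qed.

Lemma sec_scale c s : sec (c *: s) = fscale c (sec s).
Proof.
by rewrite /sec /fscale !scaler_sumr; congr pair; apply: eq_bigr => j _; rewrite mxE scalerA.
Qed.

Lemma sec_coef s :
  [/\ (sec s).1`_0 = s 0 0, (sec s).1`_1 = s 0 1, (sec s).1`_2 = s 0 3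
     & (sec s).2`_0 = s 0 2].
Proof.
rewrite secE /= !coefD !coefZ !coefC !coefX !coefXn /=.
by split; rewrite ?(mulr0, mulr1, addr0, add0r).
Qed.

Lemma sec_eq0 s : sec s = fzero k -> s = 0.
Proof.
move=> s0; have [] := sec_coef s; rewrite s0 /= !coef0.
move=> /esym c0 /esym c1 /esym c3 /esym c2.
by apply/rowP => j; case: (ord4P j) => ->; rewrite mxE ?c0 ?c1 ?c2 ?c3.
Qed.

Lemma poleord_sec_ge s i : s 0 i != 0 -> (poleord (ebasis k i) <= poleord (sec s))%N.
Proof.
have [c0 c1 c3 c2] := sec_coef s.
rewrite poleord_ebasis; case: (ord4P i) => -> //= si.
- by apply: (@poleord_ge_coef1 _ 1); rewrite c1.
- by apply: (@poleord_ge_coef2 _ 0); rewrite c2.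
- by apply: (@poleord_ge_coef1 _ 2); rewrite c3.
Qed.

Lemma good_pair_mul_eq0 s t i j :
  good_pair (s, t) -> (4 < poleord (ebasis k i) + poleord (ebasis k j))%N ->
  s 0 i * t 0 j = 0.
Proof.
move=> st hij; apply/eqP; rewrite mulf_eq0; apply/negPn/negP; rewrite negb_or.
case/andP=> si tj; have := poleord_sec_ge si; have := poleord_sec_ge tj.
case: st => /= [/sec_eq0 s0 | [/sec_eq0 t0 | ]].
- by move: si; rewrite s0 mxE eqxx.
- by move: tj; rewrite t0 mxE eqxx.
- (* ordp truncates at 0, so the bounds poleord (ebasis _) <= 4 are needed *)
  by move: (ebasis_H0 i) (ebasis_H0 j); rewrite /H0 /ordp; lia.
Qed.

Lemma good_pair_symprod_eq0 s t i j :
  good_pair (s, t) -> (4 < poleord (ebasis k i) + poleord (ebasis k j))%N ->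
  symprod s t i j = 0.
Proof.
move=> st hij; have hji := hij; rewrite addnC in hji.
rewrite mxE; case: ifP => _.
  by rewrite (good_pair_mul_eq0 st hij) (good_pair_mul_eq0 st hji) addr0.
by case: eqP => // ij; subst j; apply: good_pair_mul_eq0.
Qed.

Lemma ord_ge4_eq0 q i j :
  ord_ge4 q -> (4 < poleord (ebasis k i) + poleord (ebasis k j))%N -> q i j = 0.
Proof.
case=> l [good ->] hij; rewrite summxE big1_seq // => -[s t] /good st.
exact: good_pair_symprod_eq0.
Qed.

Definition rho_E : 'M[k]_4 := delta_mx 0 3 - delta_mx 1 1.

Lemma rho_E_sym2 : is_sym2 rho_E.
Proof.
move=> i j; rewrite !mxE.
by case: (ord4P i) => ->; case: (ord4P j) => -> //= _; apply: subrr.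
Qed.

Lemma rho_E_neq0 : rho_E != 0.
Proof. by apply/eqP => /matrixP/(_ 0 3)/eqP; rewrite !mxE /= subr0 oner_eq0. Qed.

Lemma ord_ge4_rho_E : ord_ge4 rho_E.
Proof.
exists [:: (delta_mx 0 0, delta_mx 0 3); (delta_mx 0 1, -1 *: delta_mx 0 1)]; split.
- move=> st; rewrite !inE => /orP[] /eqP -> /=; right; right;
  by rewrite /ordp ?sec_scale ?poleord_fscale ?oppr_eq0 ?oner_eq0 // !sec_delta !poleord_ebasis.
- rewrite !big_cons big_nil addr0; apply/matrixP => i j.
  by case: (ord4P i) => ->; case: (ord4P j) => ->; rewrite !mxE /=; ring.
Qed.

End SectionsOfO4p.

Arguments rho_E {k}.

Section Multiplication.
Variables (k : fieldType) (W : weierstrass k).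
Implicit Types q : 'M[k]_4.

Lemma multE q : mult W q =
  ((q 0 0)%:P + (q 0 1)%:P * 'X + (q 0 3 + q 1 1)%:P * 'X^2 + (q 1 3)%:P * 'X^3
     + (q 3 3)%:P * 'X^4 + (q 2 2)%:P * cubic W,
   (q 0 2)%:P + (q 1 2)%:P * 'X + (q 2 3)%:P * 'X^2
     - (q 2 2)%:P * (wa1 W *: 'X + (wa3 W)%:P)).
Proof.
rewrite /mult.
under eq_bigr => i _ do rewrite big_mkcond big_ord4.
under [X in (_, X)]eq_bigr => i _ do rewrite big_mkcond big_ord4.
by rewrite !big_ord4 /= -!mul_polyC; congr pair; ring.
Qed.

Lemma mult_rho_E : mult W rho_E = fzero k.
Proof. by rewrite multE !mxE /=; congr pair; ring. Qed.

Lemma ker_mult_ord_ge4 q :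
  is_sym2 q -> mult W q = fzero k -> ord_ge4 q -> q = q 0 3 *: rho_E.
Proof.
move=> sym mq0 oq.
have [q12 q13 q22 q23 q33] :
    [/\ q 1 2 = 0, q 1 3 = 0, q 2 2 = 0, q 2 3 = 0 & q 3 3 = 0].
  by split; apply: (ord_ge4_eq0 oq); rewrite !poleord_ebasis.
move: mq0; rewrite multE q12 q13 q22 q23 q33 /fzero polyC0 !mul0r !addr0 subr0.
case=> m1 /eqP; rewrite polyC_eq0 => /eqP q02.
have coef_eq0 n := congr1 (fun p : {poly k} => p`_n) m1.
move: (coef_eq0 0%N) (coef_eq0 1%N) (coef_eq0 2%N).
rewrite /= !coefD !coefCM !coefC !coefX !coefXn /=.
rewrite ?(mulr0, mulr1, addr0, add0r) => q00 q01 /eqP.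
rewrite addrC addr_eq0 => /eqP q11.
apply/matrixP => i j; rewrite !mxE.
case: (ord4P i) => ->; case: (ord4P j) => -> /=;
  rewrite ?(subrr, subr0, sub0r, mulr0, mulr1, mulrN1) //; exact: sym.
Qed.

End Multiplication.

Theorem mainTheorem2 (k : closedFieldType) (W : weierstrass k) :
  smooth_weierstrass W ->
  exists rho : 'M[k]_4,
    [/\ is_sym2 rho, rho != 0, mult W rho = fzero k, ord_ge4 rho &
     forall rho' : 'M[k]_4,
       is_sym2 rho' -> mult W rho' = fzero k -> ord_ge4 rho' ->
       exists c : k, rho' = c *: rho].
Proof.
move=> _; exists rho_E; split.
- exact: rho_E_sym2.
- exact: rho_E_neq0.
- exact: mult_rho_E.
- exact: ord_ge4_rho_E.
- by move=> q sym mq0 oq; exists (q 0 3); apply: ker_mult_ord_ge4 mq0 oq.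
Qed.
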